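(* Let $\Omega\subseteq\mathbb{R}^3$ be open and connected, and let $R\in C^2(\Omega;SO(3))$ be such that $\operatorname{curl}R=\alpha$ for some constant $\alpha\in\mathbb{R}^{3\times3}$. Then $R$ is constant.
   Context: $SO(3)$ is the group of $3\times3$ rotation matrices. For a matrix field $R$, $\operatorname{curl}$ is applied row-wise: $(\operatorname{curl}R)_{ij}=\varepsilon_{jkl}\partial_kR_{il}$ (Einstein summation, $\varepsilon_{jkl}$ the sign of the permutation $(jkl)$). *)

From HB Require Import structures.
From mathcomp Require Import all_boot all_order all_algebra.
From mathcomp Require Import all_classical all_reals all_analysis.
Set Implicit Arguments. Unset Strict Implicit. Unset Printing Implicit Defensive.
Import Order.TTheory GRing.Theory Num.Theory.
Import numFieldNormedType.Exports.
Local Open Scope classical_set_scope.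
Local Open Scope ring_scope.

Definition evec {R : realType} (k : 'I_3) : 'rV[R]_3 := delta_mx 0 k.

Definition partial {R : realType} (k : 'I_3) (f : 'rV[R]_3 -> R) (x : 'rV[R]_3) : R :=
  'D_(evec k) f x.

Definition C2_on {R : realType} (Omega : set 'rV[R]_3) (f : 'rV[R]_3 -> R) : Prop :=
  forall x, Omega x ->
    {for x, continuous f} /\
    forall k : 'I_3,
      [/\ derivable f x (evec k),
          {for x, continuous (partial k f)} &
          forall l : 'I_3,
            derivable (partial k f) x (evec l) /\
            {for x, continuous (partial l (partial k f))}].

Definition C2_mx_on {R : realType} (Omega : set 'rV[R]_3) (F : 'rV[R]_3 -> 'M[R]_3) : Prop :=
  forall i j : 'I_3, C2_on Omega (fun x => F x i j).

Definition SO3 {R : realType} (M : 'M[R]_3) : Prop := M^T *m M = 1%:M /\ \det M = 1.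

Definition levi_civita {R : realType} (j k l : 'I_3) : R :=
  match nat_of_ord j, nat_of_ord k, nat_of_ord l with
  | 0, 1, 2 | 1, 2, 0 | 2, 0, 1 => 1
  | 0, 2, 1 | 2, 1, 0 | 1, 0, 2 => -1
  | _, _, _ => 0
  end.

Definition curl {R : realType} (F : 'rV[R]_3 -> 'M[R]_3) (x : 'rV[R]_3) : 'M[R]_3 :=
  \matrix_(i < 3, j < 3)
    \sum_(k < 3) \sum_(l < 3) levi_civita j k l * partial k (fun y => F y i l) x.

From HB Require Import structures.
From mathcomp Require Import all_boot all_order all_algebra.
From mathcomp Require Import all_classical all_reals all_analysis.
From mathcomp Require Import ring lra.
Import Order.TTheory GRing.Theory Num.Theory.
Import numFieldNormedType.Exports.
Local Open Scope classical_set_scope.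
Local Open Scope ring_scope.
Set Implicit Arguments.
Unset Strict Implicit.

(* Write P_k = d_k R and W_k = R^T P_k, which is skew since R^T R = 1. For skew
   W the epsilon-delta identity gives sum_k ((W_k)_pk - (W_k)_kp) =
   2 sum_(c,a) eps_pca (curl W)_ca, and curl W = R^T curl R = R^T alpha. Hence
   the field U_p = sum_k ((R^T d_k R)_pk - (R^T d_k R)_kp) equals 2 N_p, where
   N_p = sum_(c,a) eps_pca (R^T alpha)_ca is linear in R. Take divergences: the
   second derivatives in div U cancel by the symmetry of d_p d_k, leaving a null
   Lagrangian in grad R, while div N = <curl R, alpha> = |curl R|^2 because alpha
   is constant. Rotated by R^T this becomes an identity between quadratic forms
   in the skew W_k, whose difference is positive definite; so grad R = 0, and R
   is locally constant, hence constant on the connected set. *)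

Section DirectionalDerivative.
Context {R : realType} {V : normedModType R}.
Implicit Types (f : V -> R) (x p u v : V).

Let line_quotient f p v t :
  (fun h : R => h^-1 *: (((fun s : R => f (p + s *: v)) \o shift t) (h *: 1)
                         - f (p + t *: v))) =
  (fun h => h^-1 *: ((f \o shift (p + t *: v)) (h *: v) - f (p + t *: v))).
Proof.
apply/funext => h /=; congr (_ *: (_ - _)); congr f.
by rewrite [h *: 1]mulr1 scalerDl addrCA addrC.
Qed.

Lemma derivable_line f p v t :
  derivable f (p + t *: v) v -> derivable (fun s : R => f (p + s *: v)) t 1.
Proof. by rewrite /derivable line_quotient. Qed.

Lemma derive_line f p v t :
  'D_1 (fun s : R => f (p + s *: v)) t = 'D_v f (p + t *: v).
Proof. by rewrite /derive line_quotient. Qed.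

Lemma mvt_line f p v a b : a <= b ->
  (forall t, a <= t <= b -> derivable f (p + t *: v) v) ->
  exists2 c, a <= c <= b &
    f (p + b *: v) - f (p + a *: v) = (b - a) * 'D_v f (p + c *: v).
Proof.
move=> ab der.
have := @MVT_segment R (fun s => f (p + s *: v)) (fun s => 'D_v f (p + s *: v)) a b ab.
case.
- move=> t; rewrite in_itv/= => /andP[ta tb].
  apply: DeriveDef; last exact: derive_line.
  by apply/derivable_line/der; rewrite !ltW.
- apply: continuous_in_subspaceT => t; rewrite inE/= in_itv/= => tab.
  exact/differentiable_continuous/derivable1_diffP/derivable_line/der.
- by move=> c; rewrite in_itv/= => cab ->; exists c => //; rewrite mulrC.
Qed.

Lemma derive_eq0_line f p v h :
  (forall t, `|t| <= `|h| -> derivable f (p + t *: v) v /\ 'D_v f (p + t *: v) = 0) ->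
  f (p + h *: v) = f p.
Proof.
move=> H.
have segment a b : a <= b -> `|a| <= `|h| -> `|b| <= `|h| ->
    f (p + b *: v) = f (p + a *: v).
  move=> ab ah bh.
  have inside t : a <= t <= b -> `|t| <= `|h|.
    move: ah bh; rewrite !ler_norml => /andP[? ?] /andP[? ?] /andP[? ?].
    apply/andP; split; lra.
  have [t /inside/H[] //|c /inside/H[_ ->]] := mvt_line (f:=f) (p:=p) (v:=v) ab.
  by rewrite mulr0 => /subr0_eq.
rewrite -[in RHS](addr0 p) -[in RHS](scale0r v).
have h0 : `|0 : R| <= `|h| by rewrite normr0.
by case: (leP 0 h) => [h_ge0|/ltW h_le0]; [exact: segment | symmetry; exact: segment].
Qed.

Let translate_quotient f c a v :
  (fun h : R => h^-1 *: (((fun y => f (y + c)) \o shift a) (h *: v) - f (a + c))) =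
  (fun h => h^-1 *: ((f \o shift (a + c)) (h *: v) - f (a + c))).
Proof. by apply/funext => h /=; rewrite addrA. Qed.

Lemma derivable_translate f c a v :
  derivable f (a + c) v -> derivable (fun y => f (y + c)) a v.
Proof. by rewrite /derivable translate_quotient. Qed.

Lemma derive_translate f c a v :
  'D_v (fun y => f (y + c)) a = 'D_v f (a + c).
Proof. by rewrite /derive translate_quotient. Qed.

Lemma second_difference_mvt f x u v h : 0 <= h ->
  (forall s t, 0 <= s <= h -> 0 <= t <= h ->
     derivable f (x + s *: u + t *: v) u /\
     derivable ('D_u f) (x + s *: u + t *: v) v) ->
  exists s t, [/\ 0 <= s <= h, 0 <= t <= h &
    f (x + h *: u + h *: v) - f (x + h *: u) - f (x + h *: v) + f x
      = h ^+ 2 * 'D_v ('D_u f) (x + s *: u + t *: v)].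
Proof.
move=> h0 der.
have hh : 0 <= h <= h by rewrite h0 /=.
have h00 : (0 : R) <= 0 <= h by rewrite lexx h0.
have der0 s : 0 <= s <= h -> derivable f (x + s *: u) u.
  by move=> /der /(_ h00) []; rewrite scale0r addr0.
have derh s : 0 <= s <= h -> derivable (fun y => f (y + h *: v)) (x + s *: u) u.
  by move=> /der /(_ hh) [? _]; exact: derivable_translate.
pose g y := f (y + h *: v) - f y.
have [s sh Eg] : exists2 s, 0 <= s <= h &
    g (x + h *: u) - g x = h * ('D_u f (x + s *: u + h *: v) - 'D_u f (x + s *: u)).
  have [t th|s sh] := mvt_line (f := g) (p := x) (v := u) h0.
    exact: derivableB (derh t th) (der0 t th).
  rewrite scale0r addr0 subr0 deriveB ?derive_translate; first by exists s.
  - exact: derh.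
  - exact: der0.
have [t th|t th Ed] := mvt_line (f:='D_u f) (p:=x + s *: u) (v:=v) h0.
  by have [] := der s t sh th.
exists s, t; split => //.
move: Ed; rewrite scale0r addr0 subr0 => Ed.
rewrite expr2 -mulrA -Ed -Eg /g; lra.
Qed.

Lemma nbhs_parallelogram (P : set V) x u v : (\forall y \near x, P y) ->
  exists2 h : R, 0 < h &
    forall s t, 0 <= s <= h -> 0 <= t <= h -> P (x + s *: u + t *: v).
Proof.
move=> /(nbhs_ballP x P)[e e0 eP].
have K0 : 0 < `|u| + `|v| + 1 by rewrite ltr_wpDl ?addr_ge0.
set h := e / (`|u| + `|v| + 1).
have h0 : 0 < h by rewrite divr_gt0.
have hK : h * (`|u| + `|v| + 1) = e by rewrite divfK ?gt_eqF.
exists h => // s t /andP[s0 sh] /andP[t0 th]; apply: eP; rewrite -ball_normE /=.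
rewrite -addrA opprD addrA subrr add0r normrN.
apply: (le_lt_trans (ler_normD _ _)); rewrite !normrZ !ger0_norm //.
have su : s * `|u| <= h * `|u| by rewrite ler_wpM2r.
have tv : t * `|v| <= h * `|v| by rewrite ler_wpM2r.
rewrite !mulrDr mulr1 in hK; lra.
Qed.

Lemma schwarz f x u v :
  (\forall y \near x, [/\ derivable f y u, derivable f y v,
                        derivable ('D_u f) y v & derivable ('D_v f) y u]) ->
  {for x, continuous ('D_v ('D_u f))} -> {for x, continuous ('D_u ('D_v f))} ->
  'D_v ('D_u f) x = 'D_u ('D_v f) x.
Proof.
move=> der cuv cvu.
apply/eqP; rewrite -subr_eq0 -normr_le0; apply/ler_addgt0Pr => e e0.
have e2 : 0 < e / 2 by rewrite divr_gt0.
have cu := @cvgr_dist_lt _ _ _ _ (nbhs_filter x) _ _ cuv _ e2.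
have cv := @cvgr_dist_lt _ _ _ _ (nbhs_filter x) _ _ cvu _ e2.
have [h h0 near_pts] := nbhs_parallelogram u v (filterI der (filterI cu cv)).
have der_uv s t : 0 <= s <= h -> 0 <= t <= h ->
    derivable f (x + s *: u + t *: v) u /\ derivable ('D_u f) (x + s *: u + t *: v) v.
  by move=> sh th; have [[d1 _ d3 _] _] := near_pts s t sh th; exact: (conj d1 d3).
have der_vu s t : 0 <= s <= h -> 0 <= t <= h ->
    derivable f (x + s *: v + t *: u) v /\ derivable ('D_v f) (x + s *: v + t *: u) u.
  move=> sh th; rewrite [x + s *: v + _]addrAC.
  by have [[_ d2 _ d4] _] := near_pts t s th sh; exact: (conj d2 d4).
have [s [t [sh th Euv]]] := second_difference_mvt (ltW h0) der_uv.
have [s' [t' [sh' th' Evu]]] := second_difference_mvt (ltW h0) der_vu.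
rewrite [x + s' *: v + _]addrAC in Evu.
have second_difference_sym :
    f (x + h *: u + h *: v) - f (x + h *: u) - f (x + h *: v) + f x
    = f (x + h *: v + h *: u) - f (x + h *: v) - f (x + h *: u) + f x.
  by rewrite [x + h *: v + _]addrAC [_ - f (x + h *: u) - _]addrAC.
have Euv_vu : 'D_v ('D_u f) (x + s *: u + t *: v) = 'D_u ('D_v f) (x + t' *: u + s' *: v).
  apply: (mulfI (expf_neq0 2 (lt0r_neq0 h0))).
  exact: etrans (esym Euv) (etrans second_difference_sym Evu).
have [_ [ax _]] := near_pts s t sh th; have [_ [_ bx]] := near_pts t' s' th' sh'.
(* Abstract the derivative values: any failed match between two of them would
   unfold [derive]. *)
move: ax bx Euv_vu; rewrite add0r.
move: ('D_v ('D_u f) x) ('D_u ('D_v f) x) => a0 b0.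
move: ('D_v ('D_u f) _) ('D_u ('D_v f) _) => a1 b1 ax bx a1b1.
rewrite a1b1 in ax; apply: le_trans (ler_distD b1 a0 b0) _.
by rewrite (splitr e) ltW // ltrD // distrC.
Qed.

End DirectionalDerivative.

Section DeriveBigSum.
Context {R : numFieldType} {V W : normedModType R}.

Let sumfE n (g : 'I_n -> V -> W) : (fun z => \sum_(i < n) g i z) = \sum_(i < n) g i.
Proof. by apply/funext => z; rewrite fct_sumE. Qed.

Lemma derivable_sumf n (g : 'I_n -> V -> W) x v :
  (forall i, derivable (g i) x v) -> derivable (fun z => \sum_(i < n) g i z) x v.
Proof. by rewrite sumfE; exact: derivable_sum. Qed.

Lemma derive_sumf n (g : 'I_n -> V -> W) x v : (forall i, derivable (g i) x v) ->
  'D_v (fun z => \sum_(i < n) g i z) x = \sum_(i < n) 'D_v (g i) x.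
Proof. by rewrite sumfE; exact: derive_sum. Qed.

End DeriveBigSum.

Section LocallyConstant.
Context {T : topologicalType} {Y : Type}.

Lemma connected_locally_constant (A : set T) (f : T -> Y) : connected A ->
  (forall y, A y -> \forall z \near y, f z = f y) ->
  forall x y, A x -> A y -> f x = f y.
Proof.
move=> cA loc x y Ax Ay.
have level_set : [set w | A w /\ f w = f x] = A.
  apply: cA; first by exists x.
  - exists (interior [set w | f w = f x]); first exact: open_interior.
    apply/seteqP; split => w.
    + by move=> [Aw fw]; split => //; apply: filterS (loc w Aw) => z /= ->.
    + by move=> [Aw /nbhs_singleton].
  - exists (~` interior [set w | f w <> f x]).
      exact/open_closedC/open_interior.
    apply/seteqP; split => w.
    + by move=> [Aw fw]; split => // /nbhs_singleton.
    + move=> [Aw nI]; split => //; apply: contrapT => fw; apply: nI.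
      by apply: filterS (loc w Aw) => z /= ->.
by move: Ay; rewrite -level_set => -[_ ->].
Qed.

End LocallyConstant.

Local Notation i0 := (ord0 : 'I_3).
Local Notation i1 := (lift ord0 ord0 : 'I_3).
Local Notation i2 := (lift ord0 (lift ord0 ord0) : 'I_3).

Lemma ord3P (i : 'I_3) : [\/ i = i0, i = i1 | i = i2].
Proof.
by case: i => [[|[|[|//]]] ?]; [constructor 1|constructor 2|constructor 3]; apply: val_inj.
Qed.

Section CoordinateLines.
Context {R : realType}.
Local Notation V3 := 'rV[R]_3.

Lemma row3_decomp (y z : V3) : z = y + (z 0 i0 - y 0 i0) *: evec i0
  + (z 0 i1 - y 0 i1) *: evec i1 + (z 0 i2 - y 0 i2) *: evec i2.
Proof.
apply/rowP => i; rewrite !mxE /=.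
by case: (ord3P i) => ->; rewrite -!val_eqE /=; ring.
Qed.

Lemma ball_evec3 (y : V3) (a b c r : R) : `|a| < r -> `|b| < r -> `|c| < r ->
  ball y r (y + a *: evec i0 + b *: evec i1 + c *: evec i2).
Proof.
move=> ar br cr; split=> [|i j]; first exact: le_lt_trans ar.
rewrite /ball /= !mxE (ord1 i) eqxx /=.
rewrite (_ : forall p q s t : R, p - (p + q + s + t) = - (q + s + t)); last by move=> *; ring.
by rewrite normrN; case: (ord3P j) => ->; rewrite -!val_eqE /= !(mulr1, mulr0, addr0, add0r).
Qed.

Lemma partial_eq0_locally_constant (Om : set V3) (f : V3 -> R) : open Om ->
  (forall y, Om y -> forall k, derivable f y (evec k) /\ partial k f y = 0) ->
  forall y, Om y -> \forall z \near y, f z = f y.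
Proof.
move=> oOm H y Oy.
have [r r0 rOm] := (nbhs_ballP y Om).1 (open_nbhs_nbhs (conj oOm Oy)).
apply/nbhs_ballP; exists r => // z yz.
have dz i : `|z 0 i - y 0 i| < r by case: yz => _ /(_ 0 i); rewrite /ball /= distrC.
rewrite (row3_decomp y z).
set d0 := z 0 i0 - y 0 i0; set d1 := z 0 i1 - y 0 i1; set d2 := z 0 i2 - y 0 i2.
have inOm a b c : `|a| <= `|d0| -> `|b| <= `|d1| -> `|c| <= `|d2| ->
    Om (y + a *: evec i0 + b *: evec i1 + c *: evec i2).
  move=> ad bd cd; apply/rOm/ball_evec3.
  - exact: le_lt_trans ad (dz i0).
  - exact: le_lt_trans bd (dz i1).
  - exact: le_lt_trans cd (dz i2).
have n0 (d : R) : `|0 : R| <= `|d| by rewrite normr0.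
rewrite derive_eq0_line; last by move=> t td; apply/H/inOm.
rewrite derive_eq0_line; last first.
  by move=> t td; apply: H; have := inOm d0 t 0 (lexx _) td (n0 _); rewrite scale0r addr0.
rewrite derive_eq0_line //.
by move=> t td; apply: H; have := inOm t 0 0 td (n0 _) (n0 _); rewrite !scale0r !addr0.
Qed.

End CoordinateLines.

Section CurlAlgebra.
Context {R : realType}.
Implicit Types (M A : 'M[R]_3) (P W : 'I_3 -> 'M[R]_3).

Definition curl_mx P : 'M[R]_3 :=
  \matrix_(i, j) \sum_(k < 3) \sum_(l < 3) levi_civita j k l * P k i l.

Definition levi_contract A (p : 'I_3) : R :=
  \sum_(c < 3) \sum_(a < 3) levi_civita p c a * A c a.

Definition skew_trace W (p : 'I_3) : R := \sum_(k < 3) (W k p k - W k k p).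

(* Twice the sum over the rows m of the second invariant (sum of principal 2x2
   minors) of the matrices (P k m l)_(k,l): a null Lagrangian when P = grad F. *)
Definition minor2 P : R := \sum_(p < 3) skew_trace (fun k => (P p)^T *m P k) p.

Definition sqnorm A : R := \sum_(i < 3) \sum_(j < 3) A i j ^+ 2.

Lemma levi_contract_curl_mx W p :
  levi_contract (curl_mx W) p = \tr (W p) - \sum_(k < 3) W k k p.
Proof.
rewrite /levi_contract /curl_mx /mxtrace !big_ord_recl !big_ord0 !mxE !big_ord_recl !big_ord0.
by case: (ord3P p) => ->; rewrite /levi_civita /=; ring.
Qed.

Lemma skew_trace_levi_contract_curl W : (forall k, (W k)^T = - W k) ->
  forall p, skew_trace W p = 2 * levi_contract (curl_mx W) p.
Proof.
move=> skW p.
have Wji k i j : W k j i = - W k i j.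
  by have := congr1 (fun A => A i j) (skW k); rewrite !mxE.
have tr0 k : \tr (W k) = 0.
  by have := mxtrace_tr (W k); rewrite skW raddfN /=; lra.
rewrite levi_contract_curl_mx tr0 sub0r /skew_trace mulrN -mulNr mulr_sumr.
by apply: eq_bigr => k _; rewrite Wji; ring.
Qed.

Lemma skew_traceD W1 W2 p :
  skew_trace (fun k => W1 k + W2 k) p = skew_trace W1 p + skew_trace W2 p.
Proof. by rewrite -big_split; apply: eq_bigr => k _; rewrite !mxE opprD addrACA. Qed.

Lemma sum_skew_trace_sym M (H : 'I_3 -> 'I_3 -> 'M[R]_3) : (forall p k, H p k = H k p) ->
  \sum_(p < 3) skew_trace (fun k => M *m H p k) p = 0.
Proof.
move=> Hsym; apply/eqP; rewrite /skew_trace; under eq_bigr do rewrite sumrB.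
rewrite sumrB subr_eq0 [X in _ == X]exchange_big /=; apply/eqP.
by apply: eq_bigr => p _; apply: eq_bigr => k _; rewrite Hsym.
Qed.

Lemma curl_mx_mulmx M W : curl_mx (fun k => M *m W k) = M *m curl_mx W.
Proof.
apply/matrixP => i j; rewrite !mxE.
rewrite !big_ord_recl !big_ord0 !mxE !big_ord_recl !big_ord0.
by case: (ord3P j) => ->; rewrite /levi_civita /=; ring.
Qed.

Lemma minor2_mulmx M P : M^T *m M = 1%:M -> minor2 (fun k => M *m P k) = minor2 P.
Proof.
move=> MTM; apply: eq_bigr => p _; apply: eq_bigr => k _.
by rewrite trmx_mul -mulmxA (mulmxA M^T) MTM mul1mx.
Qed.

Lemma sqnormE A : sqnorm A = \tr (A *m A^T).
Proof.
rewrite /mxtrace; apply: eq_bigr => i _; rewrite mxE.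
by apply: eq_bigr => j _; rewrite mxE expr2.
Qed.

Lemma sqnorm_mulmx M A : M^T *m M = 1%:M -> sqnorm (M *m A) = sqnorm A.
Proof.
by move=> MTM; rewrite !sqnormE trmx_mul mulmxA mxtrace_mulC !mulmxA MTM mul1mx.
Qed.

Lemma sum_levi_contract_mulmx P A :
  \sum_(p < 3) levi_contract ((P p)^T *m A) p
  = \sum_(b < 3) \sum_(a < 3) curl_mx P b a * A b a.
Proof.
rewrite /levi_contract /curl_mx.
rewrite !big_ord_recl !big_ord0 !mxE !big_ord_recl !big_ord0 !mxE /levi_civita /=.
ring.
Qed.

Lemma sum_levi_contract_curl P :
  \sum_(p < 3) levi_contract ((P p)^T *m curl_mx P) p = sqnorm (curl_mx P).
Proof.
rewrite sum_levi_contract_mulmx.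
by apply: eq_bigr => b _; apply: eq_bigr => a _; rewrite expr2.
Qed.

Lemma skew_minor2_curl_eq0 W : (forall k, (W k)^T = - W k) ->
  minor2 W = 2 * sqnorm (curl_mx W) -> forall k, W k = 0.
Proof.
move=> skW E.
have Wji k i j : W k j i = - W k i j.
  by have := congr1 (fun A => A i j) (skW k); rewrite !mxE.
have Wii k i : W k i i = 0.
  by have := Wji k i i; lra.
pose x k := W k i0 i1; pose y k := W k i0 i2; pose z k := W k i1 i2.
(* With g_k the axial vector of W k and G the matrix of rows g_k, the sum below
   is (tr G)^2 + |G|^2 + 2 |sym G|^2. *)
have sos : (- z i0 + y i1 - x i2) ^+ 2 + 3 * (z i0 ^+ 2 + y i1 ^+ 2 + x i2 ^+ 2)
    + (y i0 ^+ 2 + z i1 ^+ 2 + (y i0 - z i1) ^+ 2)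
    + (x i0 ^+ 2 + z i2 ^+ 2 + (x i0 + z i2) ^+ 2)
    + (x i1 ^+ 2 + y i2 ^+ 2 + (y i2 - x i1) ^+ 2) = 0.
  rewrite -(subrr (minor2 W)) {1}E /minor2 /skew_trace /sqnorm /curl_mx /x /y /z.
  rewrite !big_ord_recl !big_ord0 !mxE !big_ord_recl !big_ord0 !mxE /levi_civita /=.
  by rewrite !(Wji _ i0 i1) !(Wji _ i0 i2) !(Wji _ i1 i2) !Wii; ring.
have sq0 (u : R) : u ^+ 2 <= 0 -> u = 0.
  by move=> u0; apply/eqP; rewrite -sqrf_eq0 eq_le u0 sqr_ge0.
have xyz0 k : [/\ x k = 0, y k = 0 & z k = 0].
  have := sqr_ge0 (- z i0 + y i1 - x i2); have := sqr_ge0 (y i0 - z i1).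
  have := sqr_ge0 (x i0 + z i2); have := sqr_ge0 (y i2 - x i1).
  have := sqr_ge0 (x i0); have := sqr_ge0 (x i1); have := sqr_ge0 (x i2).
  have := sqr_ge0 (y i0); have := sqr_ge0 (y i1); have := sqr_ge0 (y i2).
  have := sqr_ge0 (z i0); have := sqr_ge0 (z i1); have := sqr_ge0 (z i2).
  by move=> *; case: (ord3P k) => ->; split; apply: sq0; lra.
move=> k; apply/matrixP => a b; rewrite mxE.
have [X Y Z] := xyz0 k; rewrite /x /y /z in X Y Z.
by case: (ord3P a) => ->; case: (ord3P b) => ->;
  rewrite ?Wii // ?(Wji _ i0 i1) ?(Wji _ i0 i2) ?(Wji _ i1 i2) ?X ?Y ?Z ?oppr0.
Qed.

Lemma orthogonal_minor2_curl_eq0 M P : M^T *m M = 1%:M ->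
  (forall k, M^T *m P k + (P k)^T *m M = 0) ->
  minor2 P = 2 * sqnorm (curl_mx P) -> forall k, P k = 0.
Proof.
move=> MTM skew E k.
have MMT : M *m M^T = 1%:M by apply: mulmx1C.
pose W k := M^T *m P k.
have PE : P = (fun k => M *m W k) by apply/funext => l; rewrite mulmxA MMT mul1mx.
have skW l : (W l)^T = - W l.
  by apply/eqP; rewrite -subr_eq0 opprK trmx_mul trmxK addrC skew.
rewrite PE minor2_mulmx // curl_mx_mulmx sqnorm_mulmx // in E.
by rewrite PE (skew_minor2_curl_eq0 skW E) mulmx0.
Qed.

End CurlAlgebra.

Section MatrixFields.
Context {R : realType}.
Local Notation V3 := 'rV[R]_3.
Implicit Types (x : V3) (k : 'I_3).

Definition partial_mx {m n} k (F : V3 -> 'M[R]_(m, n)) x : 'M[R]_(m, n) :=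
  \matrix_(i, j) partial k (fun y => F y i j) x.

Lemma partial_mxE m n k (F : V3 -> 'M[R]_(m, n)) x i j :
  partial_mx k F x i j = partial k (fun y => F y i j) x.
Proof. exact: mxE. Qed.

Definition derivable_mx {m n} k (F : V3 -> 'M[R]_(m, n)) x : Prop :=
  forall i j, derivable (fun y => F y i j) x (evec k).

Let entry_trE m n (A : V3 -> 'M[R]_(m, n)) i j :
  (fun y => (A y)^T i j) = (fun y => A y j i).
Proof. by apply/funext => y; rewrite mxE. Qed.

Lemma derivable_mx_tr m n k (A : V3 -> 'M[R]_(m, n)) x :
  derivable_mx k A x -> derivable_mx k (fun y => (A y)^T) x.
Proof. by move=> dA i j; rewrite entry_trE. Qed.

Lemma partial_mx_tr m n k (A : V3 -> 'M[R]_(m, n)) x :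
  partial_mx k (fun y => (A y)^T) x = (partial_mx k A x)^T.
Proof. by apply/matrixP => i j; rewrite !mxE entry_trE. Qed.

Let entry_mulmxE m n p (A : V3 -> 'M[R]_(m, n)) (B : V3 -> 'M[R]_(n, p)) i j :
  (fun y => (A y *m B y) i j) = (fun y => \sum_(l < n) A y i l * B y l j).
Proof. by apply/funext => y; rewrite mxE. Qed.

Lemma derivable_mx_mulmx m n p k (A : V3 -> 'M[R]_(m, n)) (B : V3 -> 'M[R]_(n, p)) x :
  derivable_mx k A x -> derivable_mx k B x -> derivable_mx k (fun y => A y *m B y) x.
Proof.
by move=> dA dB i j; rewrite entry_mulmxE; apply: derivable_sumf => l; exact: derivableM.
Qed.

Lemma partial_mx_mulmx m n p k (A : V3 -> 'M[R]_(m, n)) (B : V3 -> 'M[R]_(n, p)) x :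
  derivable_mx k A x -> derivable_mx k B x ->
  partial_mx k (fun y => A y *m B y) x = partial_mx k A x *m B x + A x *m partial_mx k B x.
Proof.
move=> dA dB; apply/matrixP => i j; rewrite !mxE /partial entry_mulmxE derive_sumf.
  rewrite -big_split; apply: eq_bigr => l _ /=.
  by rewrite deriveM // !mxE addrC; congr (_ + _); first exact: mulrC.
by move=> l; exact: derivableM.
Qed.

Lemma derivable_mx_mulmxr m n p k (A : V3 -> 'M[R]_(m, n)) (C : 'M[R]_(n, p)) x :
  derivable_mx k A x -> derivable_mx k (fun y => A y *m C) x.
Proof. by move=> dA; apply: derivable_mx_mulmx dA _ => i j; exact: derivable_cst. Qed.

Lemma partial_mx_mulmxr m n p k (A : V3 -> 'M[R]_(m, n)) (C : 'M[R]_(n, p)) x :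
  derivable_mx k A x -> partial_mx k (fun y => A y *m C) x = partial_mx k A x *m C.
Proof.
move=> dA; have dC : derivable_mx k (fun=> C) x by move=> i j; exact: derivable_cst.
rewrite partial_mx_mulmx //.
have -> : partial_mx k (fun=> C) x = 0.
  by apply/matrixP => i j; rewrite !mxE; exact: derive_cst.
by rewrite mulmx0 addr0.
Qed.

Lemma partial_mx_orthogonal n k (F : V3 -> 'M[R]_n) x :
  (\forall y \near x, (F y)^T *m F y = 1%:M) -> derivable_mx k F x ->
  (F x)^T *m partial_mx k F x + (partial_mx k F x)^T *m F x = 0.
Proof.
move=> orth dF.
rewrite addrC -partial_mx_tr -(partial_mx_mulmx (derivable_mx_tr dF) dF).
apply/matrixP => i j; rewrite !mxE /partial.
rewrite (near_eq_derive (g := cst ((1%:M : 'M[R]_n) i j))) ?derive_cst //.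
by apply: filterS orth => y ->.
Qed.

Lemma partial_skew_trace (W : V3 -> 'I_3 -> 'M[R]_3) x p q :
  (forall k, derivable_mx p (W^~ k) x) ->
  partial p (fun z => skew_trace (W z) q) x = skew_trace (fun k => partial_mx p (W^~ k) x) q.
Proof.
move=> dW; rewrite /partial derive_sumf => [|k]; last exact: derivableB (dW k q k) (dW k k q).
by apply: eq_bigr => k _; rewrite deriveB ?mxE //; apply: dW.
Qed.

Lemma derivable_levi_contract (B : V3 -> 'M[R]_3) x p q : derivable_mx p B x ->
  derivable (fun z => levi_contract (B z) q) x (evec p).
Proof.
move=> dB; apply: derivable_sumf => c; apply: derivable_sumf => a.
exact: derivableM (derivable_cst _ _ _) (dB c a).
Qed.

Lemma partial_levi_contract (B : V3 -> 'M[R]_3) x p q : derivable_mx p B x ->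
  partial p (fun z => levi_contract (B z) q) x = levi_contract (partial_mx p B x) q.
Proof.
move=> dB; rewrite /partial derive_sumf => [|c]; last first.
  by apply: derivable_sumf => a; exact: derivableM (derivable_cst _ _ _) (dB c a).
apply: eq_bigr => c _; rewrite derive_sumf => [|a]; last first.
  exact: derivableM (derivable_cst _ _ _) (dB c a).
by apply: eq_bigr => a _; rewrite deriveMl // mxE.
Qed.

Lemma curlE (F : V3 -> 'M[R]_3) x : curl F x = curl_mx (fun k => partial_mx k F x).
Proof.
apply/matrixP => i j; rewrite !mxE.
by apply: eq_bigr => k _; apply: eq_bigr => l _; rewrite mxE.
Qed.

End MatrixFields.

Section RotationFieldWithConstantCurl.
Context {R : realType}.
Local Notation V3 := 'rV[R]_3.
Variables (Om : set V3) (F : V3 -> 'M[R]_3).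
Hypotheses (oOm : open Om) (C2F : C2_mx_on Om F).

Lemma C2_derivable_mx x k : Om x -> derivable_mx k F x.
Proof. by move=> Ox i j; have [_ /(_ k) []] := C2F i j Ox. Qed.

Let partial_mx_entry k i j : (fun y => partial_mx k F y i j) = partial k (fun y => F y i j).
Proof. by apply/funext => y; rewrite partial_mxE. Qed.

Lemma C2_derivable_partial_mx x p k : Om x -> derivable_mx p (partial_mx k F) x.
Proof.
by move=> Ox i j; rewrite partial_mx_entry; have [_ /(_ k) [_ _ /(_ p) []]] := C2F i j Ox.
Qed.

Lemma C2_partial_mxC x p k : Om x ->
  partial_mx p (partial_mx k F) x = partial_mx k (partial_mx p F) x.
Proof.
move=> Ox; apply/matrixP => i j.
(* Side-restricted rewrites: matching one side against the other unfolds [derive]. *)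
rewrite [LHS]partial_mxE [RHS]partial_mxE [in LHS]partial_mx_entry [in RHS]partial_mx_entry.
apply: schwarz.
- apply: filterS (open_nbhs_nbhs (conj oOm Ox)) => y Oy; have [_ Cy] := C2F i j Oy.
  have [dk _ /(_ p) [dkp _]] := Cy k; have [dp _ /(_ k) [dpk _]] := Cy p.
  exact: And4 dk dp dkp dpk.
- by have [_ /(_ k) [_ _ /(_ p) [_ c]]] := C2F i j Ox; exact: c.
- by have [_ /(_ p) [_ _ /(_ k) [_ c]]] := C2F i j Ox; exact: c.
Qed.

Lemma sum_partial_skew_trace x : Om x ->
  \sum_(p < 3) partial p (fun z => skew_trace (fun k => (F z)^T *m partial_mx k F z) p) x
  = minor2 (fun k => partial_mx k F x).
Proof.
move=> Ox; have dF k : derivable_mx k F x := C2_derivable_mx Ox.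
have ddF p k : derivable_mx p (partial_mx k F) x := C2_derivable_partial_mx Ox.
have dW p k : derivable_mx p (fun z => (F z)^T *m partial_mx k F z) x :=
  derivable_mx_mulmx (derivable_mx_tr (dF p)) (ddF p k).
have dWE p k : partial_mx p (fun z => (F z)^T *m partial_mx k F z) x
    = (partial_mx p F x)^T *m partial_mx k F x + (F x)^T *m partial_mx p (partial_mx k F) x.
  by rewrite partial_mx_mulmx ?partial_mx_tr //; exact: derivable_mx_tr.
have step p : partial p (fun z => skew_trace (fun k => (F z)^T *m partial_mx k F z) p) x
    = skew_trace (fun k => (partial_mx p F x)^T *m partial_mx k F x) p
      + skew_trace (fun k => (F x)^T *m partial_mx p (partial_mx k F) x) p.
  rewrite partial_skew_trace; last exact: dW.
  by rewrite -skew_traceD; congr (skew_trace _ p); apply/funext => k; exact: dWE.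
rewrite (eq_bigr _ (fun p _ => step p)).
have Hsym p k : partial_mx p (partial_mx k F) x = partial_mx k (partial_mx p F) x.
  exact: C2_partial_mxC.
by rewrite big_split /= (sum_skew_trace_sym (F x)^T Hsym) addr0.
Qed.

Hypothesis SO3F : forall y, Om y -> SO3 (F y).

Lemma rotation_partial_skew y k : Om y ->
  (F y)^T *m partial_mx k F y + (partial_mx k F y)^T *m F y = 0.
Proof.
move=> Oy; apply: partial_mx_orthogonal (C2_derivable_mx Oy).
by apply: filterS (open_nbhs_nbhs (conj oOm Oy)) => z /SO3F[].
Qed.

Variable alpha : 'M[R]_3.
Hypothesis curlF : forall y, Om y -> curl F y = alpha.

Lemma rotation_skew_trace y p : Om y ->
  skew_trace (fun k => (F y)^T *m partial_mx k F y) p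
  = 2 * levi_contract ((F y)^T *m alpha) p.
Proof.
move=> Oy; rewrite skew_trace_levi_contract_curl => [|k].
  by rewrite curl_mx_mulmx -curlE curlF.
apply/eqP; rewrite -subr_eq0 opprK trmx_mul trmxK addrC.
by apply/eqP; exact: rotation_partial_skew.
Qed.

Lemma rotation_partial_mx_eq0 x : Om x -> forall k, partial_mx k F x = 0.
Proof.
move=> Ox; have [FTF _] := SO3F Ox.
apply: (orthogonal_minor2_curl_eq0 FTF (fun k => rotation_partial_skew k Ox)).
rewrite -sum_partial_skew_trace // -sum_levi_contract_curl -curlE (curlF Ox).
rewrite mulr_sumr; apply: eq_bigr => p _.
pose N z := levi_contract ((F z)^T *m alpha) p.
rewrite /partial (near_eq_derive (g := fun z => 2 * N z)); last first.
  by apply: filterS (open_nbhs_nbhs (conj oOm Ox)) => z /rotation_skew_trace ->.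
have dFT : derivable_mx p (fun z => (F z)^T) x := derivable_mx_tr (C2_derivable_mx Ox).
have dN := derivable_mx_mulmxr (C := alpha) dFT.
rewrite deriveMl; last exact: derivable_levi_contract.
by rewrite -/(partial p _ x) partial_levi_contract // partial_mx_mulmxr // partial_mx_tr.
Qed.

End RotationFieldWithConstantCurl.

Theorem theorem4p4 (R : realType) (Omega : set 'rV[R]_3)
  (F : 'rV[R]_3 -> 'M[R]_3) (alpha : 'M[R]_3) :
  open Omega -> connected Omega ->
  C2_mx_on Omega F ->
  (forall x, Omega x -> SO3 (F x)) ->
  (forall x, Omega x -> curl F x = alpha) ->
  forall x y, Omega x -> Omega y -> F x = F y.
Proof.
move=> oOm cOm C2F SO3F curlF x y Ox Oy; apply/matrixP => i j.
apply: (connected_locally_constant (f := fun z => F z i j) cOm _ Ox Oy) => z Oz.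
apply: (partial_eq0_locally_constant oOm _ Oz) => w Ow k.
split; first by have [_ /(_ k) []] := C2F i j w Ow.
have := congr1 (fun A : 'M[R]_3 => A i j) (rotation_partial_mx_eq0 oOm C2F SO3F curlF Ow k).
by rewrite partial_mxE mxE.
Qed.
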